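(* Disjoint Factors can be solved (statically) in $\mathcal{O}(k2^k+kn)$ time.
   Context: Disjoint Factors: given an integer $k$ and a word $w\in\{1,\ldots,k\}^\star$ of length $n$, decide whether there exist pairwise disjoint (contiguous) subwords $w_1,\ldots,w_k$ of $w$ such that each $w_i$ has length at least $2$ and begins and ends with the symbol $i$. Word-RAM model. *)

From Stdlib Require Import PeanoNat.
From mathcomp Require Import all_boot.
Set Implicit Arguments. Unset Strict Implicit. Unset Printing Implicit Defensive.

(* A word w of length n = size w over the alphabet {1,...,k} is a      *)
(* seq nat whose letters a satisfy 1 <= a <= k.  A factor (contiguous  *)
(* subword) is given by its start/end positions s <= e < n; it has     *)
(* length >= 2 iff s < e, and it begins and ends with i iff            *)
(* w_s = w_e = i.  The factors w_1..w_k are pairwise disjoint iff their *)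
(* position intervals [s_i, e_i] are pairwise disjoint.                *)

Definition is_word (k : nat) (w : seq nat) : bool :=
  all (fun a => (0 < a) && (a <= k)) w.

Definition DisjointFactors (k : nat) (w : seq nat) : Prop :=
  exists (s e : nat -> nat),
    (forall i, 1 <= i <= k ->
        [/\ s i < e i, e i < size w, nth 0 w (s i) = i & nth 0 w (e i) = i]) /\
    (forall i j, 1 <= i <= k -> 1 <= j <= k -> i != j ->
        (e i < s j) || (e j < s i)).

(* Word-RAM with word size ws: every memory cell holds a word, i.e. a  *)
(* natural number < 2^ws; arithmetic is modulo 2^ws; unit-cost ops.    *)
(* Memory is addressed by words (indirect addressing) or by constant   *)
(* addresses written in the (fixed, input-independent) program.        *)

Inductive binop :=
| OAdd | OSub | OMul | ODiv | OMod | OAnd | OOr | OXor | OShl | OShr | OLt | OEq.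

Inductive instr :=
| IConst of nat & nat          (* IConst d c     : M[d] := c mod 2^ws       *)
| IBin of binop & nat & nat & nat (* IBin op d a b : M[d] := M[a] op M[b]   *)
| ILoad of nat & nat           (* ILoad d a      : M[d] := M[M[a]]          *)
| IStore of nat & nat          (* IStore a s     : M[M[a]] := M[s]          *)
| IJz of nat & nat             (* IJz a l        : if M[a] = 0 goto l       *)
| IJmp of nat                  (* IJmp l         : goto l                   *)
| IHalt.

Definition eval_binop (ws : nat) (op : binop) (x y : nat) : nat :=
  let W := 2 ^ ws in
  match op with
  | OAdd => (x + y) %% W
  | OSub => (x + W - y %% W) %% W
  | OMul => (x * y) %% W
  | ODiv => if y == 0 then 0 else x %/ y
  | OMod => if y == 0 then 0 else x %% y
  | OAnd => Nat.land x y
  | OOr  => Nat.lor x y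
  | OXor => Nat.lxor x y
  | OShl => (x * 2 ^ y) %% W
  | OShr => x %/ 2 ^ y
  | OLt  => (x < y : nat)
  | OEq  => (x == y : nat)
  end.

Definition upd (M : nat -> nat) (a v : nat) : nat -> nat :=
  fun i => if i == a then v else M i.

(* [run ws P fuel pc M] executes program P from pc with memory M for at *)
(* most [fuel] unit-cost steps (the final Halt counting as one step).   *)
(* It returns Some M' if P halts within that budget (falling off the    *)
(* end of the program also counts as halting), None otherwise.          *)
Fixpoint run (ws : nat) (P : seq instr) (fuel pc : nat) (M : nat -> nat)
  : option (nat -> nat) :=
  match fuel with
  | 0 => None
  | f.+1 =>
    let W := 2 ^ ws in
    match nth IHalt P pc with
    | IHalt => Some M
    | IConst d c => run ws P f pc.+1 (upd M d (c %% W))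
    | IBin op d a b => run ws P f pc.+1 (upd M d (eval_binop ws op (M a) (M b) %% W))
    | ILoad d a => run ws P f pc.+1 (upd M d (M (M a)))
    | IStore a s => run ws P f pc.+1 (upd M (M a) (M s))
    | IJz a l => run ws P f (if M a == 0 then l else pc.+1) M
    | IJmp l => run ws P f l M
    end
  end.

Definition init_mem (k : nat) (w : seq nat) : nat -> nat :=
  fun i => if i == 0 then k
           else if i == 1 then size w
           else if (2 <= i) && (i < size w + 2) then nth 0 w (i - 2)
           else 0.

From mathcomp Require Import all_boot zify.
Set Implicit Arguments. Unset Strict Implicit. Unset Printing Implicit Defensive.

(* For a set S of letters let dp S be the length of the shortest prefix of w
   containing pairwise disjoint factors for all letters of S (n+1 if there is
   none). In an optimal family the factor ending last may be replaced by the
   earliest-ending factor of its letter that starts after the prefix used by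
   the others, so dp S is the minimum over i in S of the end of the
   earliest-ending i-factor starting at or after dp (S \ {i}), and w is a
   yes-instance iff dp {1..k} <= n. With the next-occurrence table
   next_occ p c, filled from right to left in O(kn), such an end costs two
   lookups, so all 2^k subsets are processed in O(k 2^k). *)

Lemma eq_in_foldl (T : eqType) (R : Type) (f g : R -> T -> R) z (s : seq T) :
  (forall y x, x \in s -> f y x = g y x) -> foldl f z s = foldl g z s.
Proof.
elim: s z => //= x s IHs z fg; rewrite fg ?mem_head // IHs // => y x' s_x'.
by apply: fg; rewrite inE s_x' orbT.
Qed.

Lemma eqn_mulnD_small d p c p' c' : c < d -> c' < d ->
  (p * d + c == p' * d + c') = (p == p') && (c == c').
Proof.
move=> lt_cd lt_c'd; apply/eqP/andP => [eq_pc | [/eqP -> /eqP ->] //].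
have d_gt0 : 0 < d by lia.
have := congr1 (divn^~ d) eq_pc; have := congr1 (modn^~ d) eq_pc.
rewrite /= !divnMDl // !divn_small // !modnMDl !modn_small // !addn0 => -> ->.
by split.
Qed.

Lemma modn_addBn W x y : y <= x -> x < W -> (x + W - y) %% W = x - y.
Proof.
move=> le_yx lt_xW; rewrite -addnBAC // modnDr modn_small //.
exact: leq_ltn_trans (leq_subr _ _) lt_xW.
Qed.

Section NextOccurrence.
Variable w : seq nat.

Definition next_occ p (c : nat) := minn (size w) (p + find (pred1 c) (drop p w)).

(* One past the end of the earliest-ending factor [c ... c] that starts at
   position [p] or later; it exceeds [size w] when there is no such factor. *)
Definition factor_end p c := (next_occ (next_occ p c).+1 c).+1.

Lemma next_occ_le p c : next_occ p c <= size w.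
Proof. exact: geq_minl. Qed.

Lemma next_occ_spec p c : next_occ p c < size w ->
  p <= next_occ p c /\ nth 0 w (next_occ p c) = c.
Proof.
rewrite /next_occ gtn_min ltnn /= => lt_find.
rewrite (minn_idPr (ltnW lt_find)); split; first exact: leq_addr.
have : has (pred1 c) (drop p w) by rewrite has_find size_drop ltn_subRL.
by move/(nth_find 0); rewrite nth_drop => /eqP.
Qed.

Lemma next_occ_min p c x : p <= x -> x < size w -> nth 0 w x = c ->
  next_occ p c <= x.
Proof.
move=> le_px lt_xn wx; apply: leq_trans (geq_minr _ _) _.
case: (leqP (find (pred1 c) (drop p w)) (x - p)) => [|lt_x]; first lia.
by have := before_find 0 lt_x; rewrite nth_drop subnKC //= wx eqxx.
Qed.

Lemma next_occ_step p c : p < size w ->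
  next_occ p c = if nth 0 w p == c then p else next_occ p.+1 c.
Proof.
move=> lt_pn; rewrite /next_occ (drop_nth 0 lt_pn) /=.
case: eqP => _; last by rewrite addnS addSn.
by rewrite addn0; apply/minn_idPr/ltnW.
Qed.

Lemma next_occ_oversize p c : size w <= p -> next_occ p c = size w.
Proof. by move=> le_np; rewrite /next_occ drop_oversize //=; apply/minn_idPl; lia. Qed.

Lemma factor_end_sound p c : factor_end p c <= size w -> exists s e,
  [/\ p <= s, s < e, e.+1 = factor_end p c, nth 0 w s = c & nth 0 w e = c].
Proof.
rewrite /factor_end => lt_en.
have [lt_se we] := next_occ_spec lt_en.
have [le_ps ws] := next_occ_spec (ltn_trans lt_se lt_en).
by exists (next_occ p c), (next_occ (next_occ p c).+1 c).
Qed.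

Lemma factor_end_min p c s e : p <= s -> s < e -> e < size w ->
  nth 0 w s = c -> nth 0 w e = c -> factor_end p c <= e.+1.
Proof.
move=> le_ps lt_se lt_en ws we; rewrite /factor_end ltnS.
have := next_occ_min le_ps (ltn_trans lt_se lt_en) ws.
by move=> le_s; apply: next_occ_min => //; apply: leq_ltn_trans lt_se.
Qed.

End NextOccurrence.

Definition bit S i := odd (S %/ 2 ^ i).

Lemma bit0n i : bit 0 i = false.
Proof. by rewrite /bit div0n. Qed.

Lemma bit_expn_le S i : bit S i -> 2 ^ i <= S.
Proof. by rewrite /bit -divn_gt0 ?expn_gt0 //; case: (S %/ 2 ^ i). Qed.

Lemma bit_subn_lt S i : bit S i -> S - 2 ^ i < S.
Proof. move/bit_expn_le; have : 0 < 2 ^ i by rewrite expn_gt0. lia. Qed.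

Lemma bit_subn S i j : bit S i -> bit (S - 2 ^ i) j = bit S j && (j != i).
Proof.
rewrite /bit => bSi; have le_iS := bit_expn_le bSi.
case: (ltngtP j i) => [lt_ji|lt_ij|->]; rewrite ?andbT ?andbF.
- have def2i : 2 ^ i = 2 ^ (i - j) * 2 ^ j by rewrite -expnD subnK // ltnW.
  rewrite def2i divnBMl oddB; last by rewrite leq_divRL ?expn_gt0 // -def2i.
  by rewrite oddX subn_eq0 leqNgt lt_ji addbF.
- have def2j : 2 ^ j = 2 ^ (j - i) * 2 ^ i by rewrite -expnD subnK // ltnW.
  have le_i_mod : 2 ^ i <= S %% 2 ^ j.
    rewrite -divn_gt0 ?expn_gt0 //.
    have : odd (S %% 2 ^ j %/ 2 ^ i).
      by rewrite def2j -modn_divl odd_mod // oddX subn_eq0 leqNgt lt_ij.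
    by case: (_ %/ _).
  have lt_rest : S %% 2 ^ j - 2 ^ i < 2 ^ j.
    by apply: leq_ltn_trans (leq_subr _ _) _; rewrite ltn_mod expn_gt0.
  by rewrite {1}(divn_eq S (2 ^ j)) -addnBA // divnMDl ?expn_gt0 // (divn_small lt_rest) addn0.
- by rewrite -[in S - _](mul1n (2 ^ i)) divnBMl oddB ?bSi // divn_gt0 ?expn_gt0.
Qed.

Lemma bit_all_ones k i : i < k -> bit (2 ^ k).-1 i.
Proof.
move=> lt_ik; rewrite /bit.
have def2k : 2 ^ k = 2 ^ (k - i) * 2 ^ i by rewrite -expnD subnK // ltnW.
have pos_hi : 0 < 2 ^ (k - i) by rewrite expn_gt0.
have pos_lo : 0 < 2 ^ i by rewrite expn_gt0.
have -> : (2 ^ k).-1 = (2 ^ (k - i)).-1 * 2 ^ i + (2 ^ i).-1.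
  rewrite def2k; move: pos_hi pos_lo.
  case: (2 ^ (k - i)) => // a _; case: (2 ^ i) => // b _.
  by rewrite mulSn addSn /= addnC.
rewrite divnMDl // divn_small ?prednK // addn0 -subn1 oddB //.
by rewrite oddX subn_eq0 leqNgt lt_ik.
Qed.

Lemma exists_bit k S : 0 < S -> S < 2 ^ k -> exists2 i, i < k & bit S i.
Proof.
move=> S_gt0; elim: k => [|k IHk] lt_S2k; first by rewrite expn0 in lt_S2k; lia.
case: (ltnP S (2 ^ k)) => [/IHk [i lt_ik bSi]|le_2kS]; first by exists i => //; lia.
exists k => //; rewrite /bit.
suff -> : S %/ 2 ^ k = 1 by [].
apply/eqP; rewrite eqn_leq divn_gt0 ?expn_gt0 // le_2kS andbT -ltnS.
by rewrite ltn_divLR ?expn_gt0 // -expnS.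
Qed.

Section GreedyPacking.
Variables (k : nat) (w : seq nat).
Local Notation n := (size w).

Definition fits S q := exists s e : nat -> nat,
  (forall i, i < k -> bit S i ->
     [/\ s i < e i, e i < q, nth 0 w (s i) = i.+1 & nth 0 w (e i) = i.+1]) /\
  (forall i j, i < k -> j < k -> bit S i -> bit S j -> i != j ->
     (e i < s j) || (e j < s i)).

Lemma fits0 q : fits 0 q.
Proof. by exists (fun=> 0), (fun=> 0); split => i; rewrite bit0n. Qed.

Lemma fits_mono S q q' : q <= q' -> fits S q -> fits S q'.
Proof.
move=> le_qq' [s [e [fac dis]]]; exists s, e; split => // i lt_ik bSi.
by have [? ? ? ?] := fac i lt_ik bSi; split => //; apply: leq_trans le_qq'.
Qed.

Lemma fits_add S i q s0 e0 : i < k -> bit S i -> fits (S - 2 ^ i) q ->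
  q <= s0 -> s0 < e0 -> nth 0 w s0 = i.+1 -> nth 0 w e0 = i.+1 -> fits S e0.+1.
Proof.
move=> lt_ik bSi [s [e [fac dis]]] le_qs0 lt_se0 ws0 we0.
have old j : j < k -> bit S j -> j != i ->
    [/\ s j < e j, e j < q, nth 0 w (s j) = j.+1 & nth 0 w (e j) = j.+1].
  by move=> lt_jk bSj ne_ji; apply: fac => //; rewrite bit_subn // bSj.
exists (fun j => if j == i then s0 else s j), (fun j => if j == i then e0 else e j).
split=> [j lt_jk bSj | j1 j2 lt_j1k lt_j2k bSj1 bSj2 ne_j12].
  case: eqVneq => [-> //|ne_ji].
  by have [? ? ? ?] := old j lt_jk bSj ne_ji; split => //; lia.
case: (eqVneq j1 i) => [eq_j1|ne_j1]; case: (eqVneq j2 i) => [eq_j2|ne_j2].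
- by move: ne_j12; rewrite eq_j1 eq_j2 eqxx.
- by have [? ? ? ?] := old j2 lt_j2k bSj2 ne_j2; apply/orP; right; lia.
- by have [? ? ? ?] := old j1 lt_j1k bSj1 ne_j1; apply/orP; left; lia.
- by apply: dis; rewrite // bit_subn // ?bSj1 ?bSj2 ?ne_j1 ?ne_j2.
Qed.

(* Take for [i] the letter whose factor ends last. *)
Lemma fits_remove_last S q : 0 < S -> S < 2 ^ k -> fits S q ->
  exists i s0 e0, [/\ i < k, bit S i, fits (S - 2 ^ i) s0, s0 < e0 &
    [/\ e0 < q, nth 0 w s0 = i.+1 & nth 0 w e0 = i.+1]].
Proof.
move=> S_gt0 lt_S2k [s [e [fac dis]]].
have [i0 lt_i0k bSi0] := exists_bit S_gt0 lt_S2k.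
case: (@arg_maxnP _ (Ordinal lt_i0k) (fun j : 'I_k => bit S j) (fun j => e j) bSi0).
move=> [i lt_ik] /= bSi e_max.
have [lt_se lt_eq ws we] := fac i lt_ik bSi.
exists i, (s i), (e i); split => //; exists s, e; split=> [j lt_jk | j1 j2 lt_j1k lt_j2k].
  rewrite bit_subn // => /andP[bSj ne_ji].
  have [? ? ? ?] := fac j lt_jk bSj; split => //.
  have := dis j i lt_jk lt_ik bSj bSi ne_ji.
  have := e_max (Ordinal lt_jk) bSj => /=; lia.
by rewrite !bit_subn // => /andP[bSj1 _] /andP[bSj2 _]; apply: dis.
Qed.

Definition dp_update (G : nat -> nat) S best i :=
  if bit S i then minn (factor_end w (G (S - 2 ^ i)) i.+1) best else best.

(* Recursion on [S - 2 ^ i < S]; fuel [S.+1] suffices for [S]. *)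
Fixpoint dp_fuel m S :=
  if m is m'.+1 then
    if S == 0 then 0 else foldl (dp_update (dp_fuel m') S) n.+1 (iota 0 k)
  else 0.

Definition dp S := dp_fuel S.+1 S.

Definition dp_partial S i := foldl (dp_update dp S) n.+1 (iota 0 i).

Lemma dp_fuel_irrelevant m1 m2 S : S < m1 -> S < m2 -> dp_fuel m1 S = dp_fuel m2 S.
Proof.
elim: m1 m2 S => [|m1 IHm] [|m2] S //= lt_Sm1 lt_Sm2; case: eqP => // /eqP S_neq0.
apply: eq_in_foldl => best i _; rewrite /dp_update; case: ifP => // bSi.
by rewrite (IHm m2) //; have := bit_subn_lt bSi; lia.
Qed.

Lemma dp_unfold S : 0 < S -> dp S = dp_partial S k.
Proof.
rewrite /dp /dp_partial /=; case: eqP => [->|_ _] //.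
apply: eq_in_foldl => best i _; rewrite /dp_update; case: ifP => // bSi.
by rewrite (@dp_fuel_irrelevant _ (S - 2 ^ i).+1) //; apply: bit_subn_lt.
Qed.

Lemma dp_partialS S i : dp_partial S i.+1 = dp_update dp S (dp_partial S i) i.
Proof. by rewrite /dp_partial -[i.+1]addn1 iotaD foldl_cat. Qed.

Lemma dp_partial_le S i : dp_partial S i <= n.+1.
Proof.
elim: i => // i IHi; rewrite dp_partialS /dp_update.
by case: ifP => // _; apply: leq_trans (geq_minr _ _) IHi.
Qed.

Lemma dp_partial_min S i j : i < j -> bit S i ->
  dp_partial S j <= factor_end w (dp (S - 2 ^ i)) i.+1.
Proof.
move=> + bSi; elim: j => // j IHj; rewrite ltnS leq_eqVlt dp_partialS /dp_update.
case/orP=> [/eqP <-|/IHj le_j]; first by rewrite bSi geq_minl.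
by case: ifP => // _; apply: leq_trans (geq_minr _ _) le_j.
Qed.

Lemma dp_partialP S j : dp_partial S j = n.+1 \/
  exists i, [/\ i < j, bit S i & dp_partial S j = factor_end w (dp (S - 2 ^ i)) i.+1].
Proof.
elim: j => [|j IHj]; first by left.
rewrite dp_partialS /dp_update; case: ifP => bSj; last first.
  by case: IHj => [|[i [lt_ij bSi ->]]]; [left | right; exists i; split => //; lia].
rewrite /minn; case: ifP => _; first by right; exists j.
by case: IHj => [|[i [lt_ij bSi ->]]]; [left | right; exists i; split => //; lia].
Qed.

Lemma dp_le S : dp S <= n.+1.
Proof. by case: (posnP S) => [->|/dp_unfold ->] //; apply: dp_partial_le. Qed.

Lemma dp_sound S : S < 2 ^ k -> dp S <= n -> fits S (dp S).
Proof.
elim/ltn_ind: S => S IHS lt_S2k.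
case: (posnP S) => [->|S_gt0]; first by move=> _; apply: fits0.
rewrite dp_unfold //; case: (dp_partialP S k) => [-> |[i [lt_ik bSi ->]]].
  by rewrite ltnn.
move=> le_end_n; have [s0 [e0 [le_s0 lt_se0 def_e0 ws0 we0]]] := factor_end_sound le_end_n.
rewrite -def_e0 in le_end_n *.
have lt_S' := bit_subn_lt bSi.
have fits_S' : fits (S - 2 ^ i) (dp (S - 2 ^ i)).
  by apply: IHS => //; [exact: ltn_trans lt_S2k | lia].
exact: fits_add fits_S' le_s0 lt_se0 ws0 we0.
Qed.

Lemma dp_min S q : S < 2 ^ k -> q <= n -> fits S q -> dp S <= q.
Proof.
elim/ltn_ind: S q => S IHS q lt_S2k le_qn.
case: (posnP S) => [->|S_gt0 /(fits_remove_last S_gt0 lt_S2k)] //.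
move=> [i [s0 [e0 [lt_ik bSi fits_S' lt_se0 [lt_e0q ws0 we0]]]]].
have lt_S' := bit_subn_lt bSi.
have le_s0 : dp (S - 2 ^ i) <= s0.
  by apply: IHS fits_S' => //; [exact: ltn_trans lt_S2k | lia].
rewrite dp_unfold //; apply: leq_trans (dp_partial_min lt_ik bSi) _.
by apply: leq_trans (factor_end_min le_s0 lt_se0 _ ws0 we0) _; lia.
Qed.

End GreedyPacking.

Lemma DisjointFactors_fits k w : DisjointFactors k w <-> fits k w (2 ^ k).-1 (size w).
Proof.
split=> [[s [e [fac dis]]] | [s [e [fac dis]]]].
  exists (fun i => s i.+1), (fun i => e i.+1); split=> [i lt_ik _ | i j lt_ik lt_jk _ _ ne_ij].
    by apply: fac; lia.
  by apply: dis; rewrite ?eqSS //; lia.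
exists (fun i => s i.-1), (fun i => e i.-1); split=> [i le_ik | i j le_ik le_jk ne_ij].
  have lt_ik : i.-1 < k by lia.
  by have := fac _ lt_ik (bit_all_ones lt_ik); rewrite prednK //; lia.
have lt_ik : i.-1 < k by lia.
have lt_jk : j.-1 < k by lia.
by apply: dis; rewrite ?bit_all_ones //; apply: contra ne_ij => /eqP; lia.
Qed.

Definition disjoint_factorsb k w := dp k w (2 ^ k).-1 <= size w.

Lemma disjoint_factorsP k w : reflect (DisjointFactors k w) (disjoint_factorsb k w).
Proof.
have lt_full : (2 ^ k).-1 < 2 ^ k by rewrite prednK ?expn_gt0.
rewrite /disjoint_factorsb; apply: (iffP idP) => [le_dp | /DisjointFactors_fits].
  by apply/DisjointFactors_fits/(fits_mono le_dp)/dp_sound.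
exact: dp_min.
Qed.

Section Reach.
Variables (ws : nat) (P : seq instr).

Definition step pc (M : nat -> nat) : option (nat * (nat -> nat)) :=
  let W := 2 ^ ws in
  match nth IHalt P pc with
  | IHalt => None
  | IConst d c => Some (pc.+1, upd M d (c %% W))
  | IBin op d a b => Some (pc.+1, upd M d (eval_binop ws op (M a) (M b) %% W))
  | ILoad d a => Some (pc.+1, upd M d (M (M a)))
  | IStore a s => Some (pc.+1, upd M (M a) (M s))
  | IJz a l => Some (if M a == 0 then l else pc.+1, M)
  | IJmp l => Some (l, M)
  end.

Fixpoint exec t pc M : option (nat * (nat -> nat)) :=
  if t is t'.+1 then
    if step pc M is Some (pc', M') then exec t' pc' M' else None
  else Some (pc, M).

Lemma exec_add t1 t2 pc M : exec (t1 + t2) pc M =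
  if exec t1 pc M is Some (pc', M') then exec t2 pc' M' else None.
Proof. by elim: t1 pc M => //= t1 IHt pc M; case: step => [[]|]. Qed.

Lemma run_step f pc M pc' M' : step pc M = Some (pc', M') ->
  run ws P f.+1 pc M = run ws P f pc' M'.
Proof. by rewrite /step /=; case: nth => [d c|op d a b|d a|a s|a l|l|] // [<- <-]. Qed.

Lemma run_exec t f pc M pc' M' : exec t pc M = Some (pc', M') ->
  run ws P (t + f) pc M = run ws P f pc' M'.
Proof.
elim: t pc M => [|t IHt] pc M; first by case=> <- <-.
rewrite addSn [exec _ _ _]/=.
by case E: step => [[pc1 M1]|] // /IHt <-; apply: run_step.
Qed.

Lemma run_mono f g pc M M' : f <= g -> run ws P f pc M = Some M' ->
  run ws P g pc M = Some M'.
Proof.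
elim: f g pc M => [|f IHf] [|g] pc M //= le_fg.
by case: nth => *; rewrite ?(IHf g).
Qed.

Definition reach pc M pc' (Q : (nat -> nat) -> Prop) b :=
  exists t M', [/\ t <= b, exec t pc M = Some (pc', M') & Q M'].

Lemma reach_step pc M pc' Q b :
  (if step pc M is Some (pc1, M1) then reach pc1 M1 pc' Q b else False) ->
  reach pc M pc' Q b.+1.
Proof.
case E: step => [[pc1 M1]|] // [t [M' [le_tb ex QM']]].
by exists t.+1, M'; rewrite /= E.
Qed.

Lemma reach_done pc M (Q : (nat -> nat) -> Prop) b : Q M -> reach pc M pc Q b.
Proof. by exists 0, M. Qed.

Lemma reach_weak pc M pc' Q b b' : b <= b' ->
  reach pc M pc' Q b -> reach pc M pc' Q b'.
Proof. by move=> le_bb' [t [M' [le_tb ? ?]]]; exists t, M'; split => //; lia. Qed.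

Lemma reach_post pc M pc' (Q Q' : (nat -> nat) -> Prop) b :
  (forall M', Q M' -> Q' M') -> reach pc M pc' Q b -> reach pc M pc' Q' b.
Proof. by move=> QQ' [t [M' [le_tb ex QM']]]; exists t, M'; split => //; apply: QQ'. Qed.

Lemma reach_seq pc M pc1 pc2 Q1 Q2 b1 b2 :
  reach pc M pc1 Q1 b1 -> (forall M1, Q1 M1 -> reach pc1 M1 pc2 Q2 b2) ->
  reach pc M pc2 Q2 (b1 + b2).
Proof.
move=> [t1 [M1 [le_t1 ex1 Q1M1]]] /(_ _ Q1M1) [t2 [M2 [le_t2 ex2 Q2M2]]].
by exists (t1 + t2), M2; rewrite exec_add ex1 leq_add.
Qed.

Lemma reach_loop (I : nat -> (nat -> nat) -> Prop) pc pc' Q N b c :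
  (forall i M, i < N -> I i M -> reach pc M pc (I i.+1) b) ->
  (forall M, I N M -> reach pc M pc' Q c) ->
  forall i, i <= N -> forall M, I i M -> reach pc M pc' Q ((N - i) * b + c).
Proof.
move=> body exit i le_iN M; move eq_m : (N - i) => m.
elim: m i M le_iN eq_m => [|m IHm] i M le_iN eq_m IiM.
  have eq_iN : i = N by lia.
  by rewrite mul0n; apply: exit; rewrite -eq_iN.
rewrite mulSn -addnA; apply: reach_seq (body _ _ _ IiM) _ => [|M1 IM1]; first by lia.
by apply: IHm IM1; lia.
Qed.

Lemma reach_run pc' M Q b f : reach 0 M pc' Q b -> nth IHalt P pc' = IHalt ->
  b < f -> exists M', run ws P f 0 M = Some M' /\ Q M'.
Proof.
move=> [t [M' [le_tb ex QM']]] halt lt_bf; exists M'; split => //.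
apply: (run_mono (f := t + 1)); first by lia.
by rewrite (run_exec _ ex) /= halt.
Qed.

End Reach.

(* Registers: 1 = n, 2 = k, 3 = k+1, 4 = base of the saved word, 5 = base of
   the next-occurrence table, 6 = base of the dp table, 7 = 1, 14 = 2^k,
   16 = n+1, 17 = 2; 8, 9 and 13 are loop counters, 15 the running minimum.
   The first two instructions dispatch n = 0 and n = 1 (cell 3 holds w_1,
   which is 0 only when n = 1, letters being positive). As registers 2..17
   overlap the input, the first 16 letters are saved first, with k parked at
   address 16n. The word is saved at 16n+1, the table [next_occ p c]
   (p <= n+1, c <= k) follows at 17n+1 + p(k+1) + c, then [dp S] for S < 2^k. *)
Definition df_prog : seq instr := [::
          IJz 1 151;
          IJz 3 153;
          IBin OAdd 1 1 1;
          IBin OAdd 1 1 1;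
          IBin OAdd 1 1 1;
          IBin OAdd 1 1 1;
          IStore 1 0;
(*   7 *) IConst 0 1;
          IBin OAdd 0 0 1;
          IStore 0 2;
          IConst 0 2;
          IBin OAdd 0 0 1;
          IStore 0 3;
          IConst 0 3;
          IBin OAdd 0 0 1;
          IStore 0 4;
          IConst 0 4;
          IBin OAdd 0 0 1;
          IStore 0 5;
          IConst 0 5;
          IBin OAdd 0 0 1;
          IStore 0 6;
          IConst 0 6;
          IBin OAdd 0 0 1;
          IStore 0 7;
          IConst 0 7;
          IBin OAdd 0 0 1;
          IStore 0 8;
          IConst 0 8;
          IBin OAdd 0 0 1;
          IStore 0 9;
          IConst 0 9;
          IBin OAdd 0 0 1;
          IStore 0 10;
          IConst 0 10;
          IBin OAdd 0 0 1;
          IStore 0 11;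
          IConst 0 11;
          IBin OAdd 0 0 1;
          IStore 0 12;
          IConst 0 12;
          IBin OAdd 0 0 1;
          IStore 0 13;
          IConst 0 13;
          IBin OAdd 0 0 1;
          IStore 0 14;
          IConst 0 14;
          IBin OAdd 0 0 1;
          IStore 0 15;
          IConst 0 15;
          IBin OAdd 0 0 1;
          IStore 0 16;
          IConst 0 16;
          IBin OAdd 0 0 1;
          IStore 0 17;
(*  55 *) IConst 0 4;
          IBin OShr 1 1 0;
          IBin OShl 4 1 0;
          ILoad 2 4;
          IConst 7 1;
          IBin OAdd 4 4 7;
          IConst 17 2;
          IBin OAdd 3 2 7;
          IBin OAdd 16 1 7;
          IBin OAdd 5 4 1;
          IBin OMul 10 16 3;
          IBin OAdd 10 10 3;
          IBin OAdd 6 5 10;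
          IBin OShl 14 7 2;
          IConst 8 16;
(*  70 *) IBin OLt 10 8 1;
          IJz 10 78;
          IBin OAdd 11 8 17;
          IBin OAdd 12 8 4;
          ILoad 11 11;
          IStore 12 11;
          IBin OAdd 8 8 7;
          IJmp 70;
(*  78 *) IBin OMul 10 1 3;
          IBin OAdd 10 10 5;
          IConst 9 0;
          IBin OAdd 12 3 3;
(*  82 *) IBin OLt 11 9 12;
          IJz 11 88;
          IBin OAdd 11 10 9;
          IStore 11 1;
          IBin OAdd 9 9 7;
          IJmp 82;
(*  88 *) IBin OMul 8 1 7;
(*  89 *) IJz 8 110;
          IBin OSub 8 8 7;
          IBin OAdd 10 8 4;
          ILoad 10 10;
          IBin OMul 11 8 3;
          IBin OAdd 11 11 5;
          IBin OAdd 12 11 3;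
          IConst 9 0;
(*  97 *) IBin OLt 13 9 3;
          IJz 13 89;
          IBin OEq 13 10 9;
          IJz 13 104;
          IBin OAdd 13 11 9;
          IStore 13 8;
          IJmp 108;
(* 104 *) IBin OAdd 13 12 9;
          ILoad 15 13;
          IBin OAdd 13 11 9;
          IStore 13 15;
(* 108 *) IBin OAdd 9 9 7;
          IJmp 97;
(* 110 *) IConst 10 0;
          IStore 6 10;
          IConst 13 1;
(* 113 *) IBin OLt 10 13 14;
          IJz 10 146;
          IBin OMul 15 16 7;
          IConst 9 0;
(* 117 *) IBin OLt 10 9 2;
          IJz 10 142;
          IBin OShr 10 13 9;
          IBin OMod 10 10 17;
          IJz 10 140;
          IBin OShl 11 7 9;
          IBin OSub 11 13 11;
          IBin OAdd 11 11 6;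
          ILoad 11 11;
          IBin OAdd 12 9 7;
          IBin OMul 11 11 3;
          IBin OAdd 11 11 5;
          IBin OAdd 11 11 12;
          ILoad 11 11;
          IBin OAdd 11 11 7;
          IBin OMul 11 11 3;
          IBin OAdd 11 11 5;
          IBin OAdd 11 11 12;
          ILoad 11 11;
          IBin OAdd 11 11 7;
          IBin OLt 10 11 15;
          IJz 10 140;
          IBin OMul 15 11 7;
(* 140 *) IBin OAdd 9 9 7;
          IJmp 117;
(* 142 *) IBin OAdd 10 6 13;
          IStore 10 15;
          IBin OAdd 13 13 7;
          IJmp 113;
(* 146 *) IBin OAdd 10 6 14;
          IBin OSub 10 10 7;
          ILoad 10 10;
          IBin OLt 0 10 16;
          IHalt;
(* 151 *) IBin OEq 0 0 1;
          IHalt;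
(* 153 *) IConst 0 0;
          IHalt
].

Arguments upd M a v i /.
Arguments init_mem k w i /.

Lemma long_run_cost k n : 0 < k ->
  70 + ((maxn 16 n - 16) * 8 + 2) + (4 + ((k.+1 + k.+1 - 0) * 6 + 2) +
  (1 + ((n - 0) * (8 + ((k.+1 - 0) * 10 + 2)) + 1) +
  (3 + ((2 ^ k - 1) * (4 + ((k - 0) * 25 + 2) + 4) + 2) + 4)))
  <= 999 * (k * 2 ^ k + k * n + 1).
Proof.
move=> k_gt0; have : 0 < 2 ^ k by rewrite expn_gt0.
have : n <= k * n by rewrite leq_pmull.
have : 2 ^ k <= k * 2 ^ k by rewrite leq_pmull.
have : k <= k * 2 ^ k by rewrite leq_pmulr ?expn_gt0.
have : (2 ^ k - 1) * (4 + ((k - 0) * 25 + 2) + 4) <= 25 * (k * 2 ^ k) + 10 * 2 ^ k.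
  by rewrite subn0; apply: leq_trans (leq_mul (leq_subr 1 _) (leqnn _)) _; lia.
lia.
Qed.

Section Correctness.
Variables (k : nat) (w : seq nat) (ws : nat).
Hypothesis word_w : is_word k w.
Hypothesis size_w_ge2 : 2 <= size w.
Hypothesis cost_fits : 1000 * (k * 2 ^ k + k * size w + 1) <= 2 ^ ws.

Local Notation n := (size w).
Local Notation wbase := (16 * size w + 1).
Local Notation nbase := (17 * size w + 1).
Local Notation nsize := ((size w).+1 * k.+1).
Local Notation dbase := (17 * size w + 1 + (nsize + k.+1)).
Local Notation reach := (reach ws df_prog).

Lemma k_gt0 : 0 < k.
Proof. by move: word_w size_w_ge2; rewrite /is_word; case: w => //= a s /andP[/andP[]]; lia. Qed.

Lemma letter_gt0 j : j < n -> 0 < nth 0 w j.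
Proof. by move=> lt_jn; move/all_nthP: word_w => /(_ 0 j lt_jn)/andP[]. Qed.

Lemma addresses_small : dbase + 2 ^ k + 64 < 2 ^ ws.
Proof.
have k_pos := k_gt0; have pos_2k : 0 < 2 ^ k by rewrite expn_gt0.
have : n <= k * n by rewrite leq_pmull.
have : 2 ^ k <= k * 2 ^ k by rewrite leq_pmull.
have : k <= k * 2 ^ k by rewrite leq_pmulr.
move: cost_fits; lia.
Qed.

Lemma modn_small_addr x : x <= dbase + 2 ^ k + 64 -> x %% 2 ^ ws = x.
Proof. by move=> le_x; apply/modn_small/(leq_ltn_trans le_x addresses_small). Qed.

Lemma modn_small_bool (b : bool) : b %% 2 ^ ws = b.
Proof. by apply: modn_small_addr; case: b; lia. Qed.

Definition layout (M : nat -> nat) :=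
  [/\ M 1 = n, M 2 = k, M 3 = k.+1, M 4 = wbase &
   [/\ M 5 = nbase, M 6 = dbase, M 7 = 1, M 14 = 2 ^ k & [/\ M 16 = n.+1 & M 17 = 2]]].

Definition word_saved (M : nat -> nat) := forall j, j < n -> M (wbase + j) = nth 0 w j.

(* Symbolic execution of one instruction: every address comparison is decided
   by [lia], registers are read off the hypotheses, and the [%% 2 ^ ws] of
   each result is dropped since all values stay below [2 ^ ws]. *)
Ltac decide_neq := repeat match goal with |- context [?x == ?a] =>
  rewrite (_ : (x == a) = false); last by apply/eqP; lia end.
Ltac read_regs := repeat match goal with
  | H : ?M ?x = _ |- context [?M ?x] => is_var M; rewrite H
  | H : (?a < ?b) = _ |- context [?a < ?b] => rewrite H
  | H : (?a == ?b) = _ |- context [?a == ?b] => rewrite H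
  end.
Ltac drop_mod := repeat match goal with |- context [?x %% 2 ^ ws] =>
  rewrite (modn_small_addr (x := x)); last by lia end.
Ltac drop_mods := rewrite ?modn_small_bool; drop_mod;
  repeat match goal with |- context [(?x + 2 ^ ws - ?y) %% 2 ^ ws] =>
    rewrite (modn_addBn (x := x) (y := y)); [| lia | have := addresses_small; lia] end;
  drop_mod.
Ltac exec_instr := apply: reach_step; rewrite /step /=; decide_neq; simpl; read_regs;
  simpl; rewrite ?mul1n ?muln1 ?[2 ^ 4]/(16); drop_mods; rewrite ?subn1 /=; decide_neq;
  simpl; read_regs.
Ltac case_layout L := case: L => R1 R2 R3 R4 [R5 R6 R7 R14 [R16 R17]].
Ltac keep_layout := rewrite /layout /=; decide_neq; read_regs; by split.
Ltac read_reg := rewrite /=; decide_neq; read_regs; rewrite ?addn1 //; lia.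
Ltac keep fact := hnf; intros; rewrite /=; decide_neq; apply: fact => //; lia.

Lemma scale_n : reach 0 (init_mem k w) 7 (fun M => [/\ M 1 = 16 * n, M (16 * n) = k &
  forall x, 2 <= x -> x != 16 * n -> M x = init_mem k w x]) 7.
Proof.
have n_neq0 : (n == 0) = false by apply/eqP; lia.
have w1_neq0 : (nth 0 w 1 == 0) = false by apply/negbTE; rewrite -lt0n letter_gt0.
have lt_3n : (3 < n + 2) = true by lia.
do 7 exec_instr.
rewrite (_ : n + n + (n + n) + (n + n + (n + n)) +
             (n + n + (n + n) + (n + n + (n + n))) = 16 * n); last lia.
apply: reach_done; split => /=; first by case: eqP; lia.
  by rewrite eqxx.
by move=> x le2x /negbTE ->; rewrite (_ : x == 1 = false) //; apply/eqP; lia.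
Qed.

Lemma save_instr j : j < 16 -> [/\ nth IHalt df_prog (7 + 3 * j) = IConst 0 j.+1,
  nth IHalt df_prog (7 + 3 * j).+1 = IBin OAdd 0 0 1 &
  nth IHalt df_prog (7 + 3 * j).+2 = IStore 0 (2 + j)].
Proof. by move=> lt_j16; do 16 (case: j lt_j16 => [|j] lt_j16; first by []). Qed.

Lemma save_block j : j <= 16 -> forall M, M 1 = 16 * n ->
  reach 7 M (7 + 3 * j) (fun M' => M' 1 = 16 * n /\ forall x, x != 0 ->
     M' x = if wbase <= x < wbase + j then M (x - 16 * n + 1) else M x) (3 * j).
Proof.
elim: j => [|j IHj] le_j16 M M1.
  by apply: reach_done; split => // x _; rewrite addn0 ltnNge andbN.
apply: (reach_weak (b := 3 * j + 3)); first lia.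
apply: reach_seq (IHj (ltnW le_j16) M M1) _ => M' [M'1 M'x].
have [I1 I2 I3] := save_instr le_j16.
have M'src : M' (2 + j) = M (2 + j) by rewrite M'x // ifF //; apply/negbTE; lia.
apply: reach_step; rewrite /step I1 /=.
apply: reach_step; rewrite /step I2 /= M'1.
apply: reach_step; rewrite /step I3 /= !modn_small_addr; try (have := addresses_small; lia).
rewrite M'src (_ : 7 + 3 * j.+1 = (7 + 3 * j).+3); last lia.
apply: reach_done; split=> [|x /negbTE x_neq0] /=; first by decide_neq.
rewrite x_neq0; case: eqP => [->|x_neq]; first by rewrite ifT; [congr M|]; lia.
by rewrite M'x ?x_neq0 //; case: ifP; case: ifP => //; lia.
Qed.

Lemma prologue : reach 0 (init_mem k w) 70 (fun M => [/\ layout M, M 8 = 16,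
  (forall j, j < 16 -> j < n -> M (wbase + j) = nth 0 w j) &
  (forall j, 16 <= j < n -> M (2 + j) = nth 0 w j)]) 70.
Proof.
have w_in x : 1 < x < n + 2 -> init_mem k w x = nth 0 w (x - 2).
  by move=> lt_x /=; rewrite lt_x !ifF //; apply/eqP; lia.
apply: (reach_seq (b1 := 7) (b2 := 63) scale_n) => M1 [M1_1 M1_k M1_x].
apply: (reach_seq (b1 := 48) (b2 := 15) (save_block (j := 16) _ M1_1)) => // M2 [M2_1 M2_x].
have M2_k : M2 (n * 16) = k.
  rewrite mulnC M2_x; last by apply/eqP; lia.
  by rewrite ifF //; apply/negbTE; lia.
do 2 exec_instr; rewrite ?mulKn //.
do 13 exec_instr.
apply: reach_done; split => //.
- by rewrite /layout /=; split; try lia; split; try lia; split; lia.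
- move=> j lt_j16 lt_jn /=; decide_neq.
  rewrite M2_x; last by apply/eqP; lia.
  rewrite ifT; last by lia.
  by rewrite M1_x ?w_in; [congr nth | | | apply/eqP]; lia.
- move=> j lt_j /=; decide_neq.
  rewrite M2_x; last by apply/eqP; lia.
  rewrite ifF; last by apply/negbTE; lia.
  by rewrite M1_x ?w_in; [congr nth | | | apply/eqP]; lia.
Qed.

Definition copying j M := [/\ layout M, M 8 = j, 16 <= j,
  forall j', j' < j -> j' < n -> M (wbase + j') = nth 0 w j' &
  forall j', j <= j' < n -> M (2 + j') = nth 0 w j'].

Lemma copy_body j M : j < maxn 16 n -> copying j M -> reach 70 M 70 (copying j.+1) 8.
Proof.
move=> lt_j [L M8 le16j saved src]; have lt_jn : (j < n) = true by lia.
case_layout L; do 8 exec_instr.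
apply: reach_done; split; [keep_layout | read_reg | lia | |].
- move=> j' lt_j' lt_j'n /=; decide_neq; case: eqP => [eq_j' | ne_j'].
    by rewrite (_ : j' = j) 1?addnC ?src //; lia.
  by apply: saved => //; lia.
- by move=> j' lt_j' /=; decide_neq; apply: src; lia.
Qed.

Lemma copy_exit M : copying (maxn 16 n) M ->
  reach 70 M 78 (fun M => layout M /\ word_saved M) 2.
Proof.
move=> [L M8 _ saved _]; have ge_jn : (maxn 16 n < n) = false by lia.
case_layout L; do 2 exec_instr.
by apply: reach_done; split; [keep_layout | keep saved].
Qed.

Lemma copy_phase : reach 0 (init_mem k w) 78 (fun M => layout M /\ word_saved M)
  (70 + ((maxn 16 n - 16) * 8 + 2)).
Proof.
apply: reach_seq prologue _ => M [L M8 saved src].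
by apply: (reach_loop copy_body copy_exit); [lia | split].
Qed.

Definition last_rows_filled i M := forall c, c < i -> M (nbase + n * k.+1 + c) = n.

Definition filling_rows i M := [/\ layout M, word_saved M, M 9 = i,
  M 10 = nbase + n * k.+1 & M 12 = k.+1 + k.+1 /\ last_rows_filled i M].

Lemma rows_body i M : i < k.+1 + k.+1 -> filling_rows i M -> reach 82 M 82 (filling_rows i.+1) 6.
Proof.
move=> lt_i [L saved M9 M10 [M12 filled]]; have lt_i' : (i < k.+1 + k.+1) = true by [].
case_layout L; do 6 exec_instr.
apply: reach_done; split; [keep_layout | keep saved | read_reg | read_reg |].
split=> [|c lt_c /=]; first read_reg.
decide_neq; case: eqP => // ne_c.
by apply: filled; lia.
Qed.

Lemma rows_exit M : filling_rows (k.+1 + k.+1) M ->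
  reach 82 M 88 (fun M => [/\ layout M, word_saved M & last_rows_filled (k.+1 + k.+1) M]) 2.
Proof.
move=> [L saved M9 M10 [M12 filled]].
have ge_i : (k.+1 + k.+1 < k.+1 + k.+1) = false by rewrite ltnn.
case_layout L; do 2 exec_instr.
by apply: reach_done; split; [keep_layout | keep saved | keep filled].
Qed.

Lemma rows_phase M : layout M -> word_saved M ->
  reach 78 M 88 (fun M => [/\ layout M, word_saved M & last_rows_filled (k.+1 + k.+1) M])
    (4 + ((k.+1 + k.+1 - 0) * 6 + 2)).
Proof.
move=> L saved; apply: reach_seq _ (reach_loop rows_body rows_exit (leq0n _)).
have L' := L; case_layout L'; do 4 exec_instr.
apply: reach_done; split; [keep_layout | keep saved | read_reg | read_reg |].
by split; first read_reg.
Qed.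

Definition table_from p M := forall p' c, p <= p' -> p' <= n.+1 -> c <= k ->
  M (nbase + (p' * k.+1 + c)) = next_occ w p' c.

Definition filling_row p c M := [/\ layout M, word_saved M, M 8 = p, M 10 = nth 0 w p &
  [/\ M 11 = nbase + p * k.+1, M 12 = nbase + p * k.+1 + k.+1, M 9 = c, table_from p.+1 M &
   forall c', c' < c -> M (nbase + (p * k.+1 + c')) = next_occ w p c']].

Lemma row_body p c M : p < n -> c < k.+1 -> filling_row p c M ->
  reach 97 M 97 (filling_row p c.+1) 10.
Proof.
move=> lt_pn lt_c [L saved M8 M10 [M11 M12 M9 table row]].
have lt_c' : (c < k.+1) = true by [].
have le_row : p * k.+1 + k.+1 <= n * k.+1 by rewrite addnC -mulSn leq_mul2r lt_pn orbT.
have next_p := next_occ_step c lt_pn.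
have new_cell q : q <= k -> (nbase + (p * k.+1 + q) == nbase + p * k.+1 + c) = (q == c).
  by move=> le_qk; rewrite -[nbase + _ + c]addnA eqn_add2l eqn_mulnD_small // eqxx.
have old_cell p' q : q <= k -> p < p' ->
    (nbase + (p' * k.+1 + q) == nbase + p * k.+1 + c) = false.
  move=> le_qk lt_pp'; rewrite -[nbase + _ + c]addnA eqn_add2l eqn_mulnD_small //.
  by case: eqP; lia.
case_layout L; case wp: (nth 0 w p == c).
- do 9 exec_instr.
  apply: reach_done; split; [keep_layout | keep saved | read_reg | read_reg |].
  split; [read_reg | read_reg | read_reg | |].
  + by move=> p' q lt_pp' le_p'n le_qk /=; decide_neq; rewrite old_cell //; apply: table.
  + move=> q lt_qc /=; decide_neq; rewrite new_cell; last by lia.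
    by case: eqP => [->|ne_qc]; [rewrite next_p wp | apply: row; lia].
- have next_cell : M (nbase + p * k.+1 + k.+1 + c) = next_occ w p.+1 c.
    rewrite (_ : nbase + _ + _ + c = nbase + (p.+1 * k.+1 + c)); last by rewrite mulSn; lia.
    by apply: table; lia.
  do 10 exec_instr.
  apply: reach_done; split; [keep_layout | keep saved | read_reg | read_reg |].
  split; [read_reg | read_reg | read_reg | |].
  + by move=> p' q lt_pp' le_p'n le_qk /=; decide_neq; rewrite old_cell //; apply: table.
  + move=> q lt_qc /=; decide_neq; rewrite new_cell; last by lia.
    by case: eqP => [->|ne_qc]; [rewrite next_p wp | apply: row; lia].
Qed.

Lemma row_exit p M : filling_row p k.+1 M ->
  reach 97 M 89 (fun M => [/\ layout M, word_saved M, M 8 = p & table_from p M]) 2.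
Proof.
move=> [L saved M8 M10 [M11 M12 M9 table row]]; have ge_c : (k.+1 < k.+1) = false by rewrite ltnn.
case_layout L; do 2 exec_instr.
apply: reach_done; split; [keep_layout | keep saved | by [] |].
move=> p' c le_pp' le_p'n le_ck /=; decide_neq.
by case: (ltngtP p p') => [lt_pp'|lt_p'p|<-]; [apply: table | lia | apply: row; lia].
Qed.

Definition building_table j M := [/\ layout M, word_saved M, M 8 = n - j & table_from (n - j) M].

Lemma build_body j M : j < n -> building_table j M ->
  reach 89 M 89 (building_table j.+1) (8 + ((k.+1 - 0) * 10 + 2)).
Proof.
move=> lt_jn [L saved M8 table]; set p := n - j.+1.
have lt_pn : p < n by rewrite /p; lia.
have le_row : p * k.+1 + k.+1 <= n * k.+1 by rewrite addnC -mulSn leq_mul2r lt_pn orbT.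
have wp : M (p + wbase) = nth 0 w p by rewrite addnC; apply: saved.
have row_loop := reach_loop (fun c M => @row_body p c M lt_pn) (@row_exit p) (leq0n _).
apply: reach_seq _ (fun M' IM' => reach_post _ (row_loop M' IM')); last first.
  by move=> M' [L' saved' M'8 table']; rewrite /building_table /p subnS.
have L' := L; case_layout L'; have M8' : M 8 = p.+1 by rewrite M8 /p; lia.
do 8 exec_instr.
apply: reach_done; split; [keep_layout | keep saved | read_reg | read_reg |].
split; [read_reg | read_reg | read_reg | | by []].
by move=> p' c lt_pp' le_p'n le_ck /=; decide_neq; apply: table; rewrite /p; lia.
Qed.

Lemma build_exit M : building_table n M -> reach 89 M 110 (fun M => layout M /\ table_from 0 M) 1.
Proof. by rewrite /building_table subnn => -[L _ M8 table]; exec_instr; apply: reach_done. Qed.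

Lemma table_phase M : layout M -> word_saved M -> last_rows_filled (k.+1 + k.+1) M ->
  reach 88 M 110 (fun M => layout M /\ table_from 0 M)
    (1 + ((n - 0) * (8 + ((k.+1 - 0) * 10 + 2)) + 1)).
Proof.
move=> L saved filled; apply: reach_seq _ (reach_loop build_body build_exit (leq0n _)).
have L' := L; case_layout L'; exec_instr.
apply: reach_done; split; [keep_layout | keep saved | read_reg |].
move=> p c le_np le_pn le_ck /=; decide_neq; rewrite subn0 in le_np.
rewrite next_occ_oversize //; case: (ltngtP p n) => [|lt_np|->]; first lia.
  rewrite (_ : nbase + _ = nbase + n * k.+1 + (k.+1 + c)); last first.
    by rewrite (_ : p = n.+1) ?mulSn; lia.
  by apply: filled; lia.
by rewrite addnA; apply: filled; lia.
Qed.

Definition dp_upto S M := forall S', S' < S -> M (dbase + S') = dp k w S'.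

Definition relaxing S i M := [/\ layout M, table_from 0 M, dp_upto S M, M 13 = S &
  M 9 = i /\ M 15 = dp_partial k w S i].

Lemma relax_skip S i M : S < 2 ^ k -> i < k -> ~~ bit S i -> relaxing S i M ->
  reach 117 M 117 (relaxing S i.+1) 7.
Proof.
move=> lt_S2k lt_ik' /negbTE bSi [L table dps M13 [M9 M15]].
have lt_ik : (i < k) = true by [].
have le_S2i : S %/ 2 ^ i <= S by apply: leq_div.
have bit_mod : (S %/ 2 ^ i %% 2 == 0) = true by rewrite modn2 -/(bit S i) bSi.
have := dp_partial_le k w S i => le_dpn.
case_layout L; do 7 exec_instr.
apply: reach_done; split; [keep_layout | keep table | keep dps | read_reg |].
by split; [read_reg | rewrite /= dp_partialS /dp_update bSi].
Qed.

Lemma relax_bit S i M : S < 2 ^ k -> i < k -> bit S i -> relaxing S i M ->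
  reach 117 M 117 (relaxing S i.+1) 25.
Proof.
move=> lt_S2k lt_ik' bSi [L table dps M13 [M9 M15]].
have lt_ik : (i < k) = true by [].
have le_S2i : S %/ 2 ^ i <= S by apply: leq_div.
have lt_mod2 : S %/ 2 ^ i %% 2 <= 1 by rewrite -ltnS ltn_mod.
have le_2i2k : 2 ^ i <= 2 ^ k by rewrite leq_pexp2l //; lia.
have bit_mod : (S %/ 2 ^ i %% 2 == 0) = false by rewrite modn2 -/(bit S i) bSi.
have le_2iS := bit_expn_le bSi.
have := dp_partial_le k w S i => le_dpn.
have dp_prev : M (S - 2 ^ i + dbase) = dp k w (S - 2 ^ i).
  by rewrite addnC; apply/dps/bit_subn_lt.
have := dp_le k w (S - 2 ^ i); move: dp_prev; set q := dp k w (S - 2 ^ i) => dp_prev le_qn.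
have le_qrow : q * k.+1 <= nsize by rewrite leq_mul2r le_qn orbT.
case_layout L; do 9 exec_instr.
have start : M (q * k.+1 + nbase + (i + 1)) = next_occ w q i.+1.
  by rewrite (_ : q * k.+1 + _ + _ = nbase + (q * k.+1 + i.+1)); [apply: table | ]; lia.
have := next_occ_le w q i.+1; move: start; set s := next_occ w q i.+1 => start le_sn.
have le_srow : (s + 1) * k.+1 <= nsize by rewrite leq_mul2r addn1 ltnS le_sn orbT.
have stop : M ((s + 1) * k.+1 + nbase + (i + 1)) = next_occ w s.+1 i.+1.
  by rewrite (_ : _ + _ + _ = nbase + (s.+1 * k.+1 + i.+1)); [apply: table | rewrite addn1]; lia.
have := next_occ_le w s.+1 i.+1; move: stop; set e := next_occ w s.+1 i.+1 => stop le_en.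
have end_e : factor_end w q i.+1 = e.+1 by [].
have relaxed : dp_partial k w S i.+1 = if e + 1 < dp_partial k w S i then e + 1
                                        else dp_partial k w S i.
  by rewrite dp_partialS /dp_update bSi end_e addn1.
case lt_e: (e + 1 < dp_partial k w S i).
- do 16 exec_instr.
  apply: reach_done; split; [keep_layout | keep table | keep dps | read_reg |].
  by split; [read_reg | rewrite /= relaxed lt_e; lia].
- do 15 exec_instr.
  apply: reach_done; split; [keep_layout | keep table | keep dps | read_reg |].
  by split; [read_reg | rewrite /= relaxed lt_e].
Qed.

Lemma relax_exit S M : relaxing S k M ->
  reach 117 M 142 (fun M => [/\ layout M, table_from 0 M, dp_upto S M, M 13 = S &
    M 15 = dp_partial k w S k]) 2.
Proof.
move=> [L table dps M13 [M9 M15]]; have ge_ik : (k < k) = false by rewrite ltnn.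
case_layout L; do 2 exec_instr.
by apply: reach_done; split; [keep_layout | keep table | keep dps | read_reg | read_reg].
Qed.

Lemma relax_body S i M : S < 2 ^ k -> i < k -> relaxing S i M ->
  reach 117 M 117 (relaxing S i.+1) 25.
Proof.
move=> lt_S2k lt_ik; case bSi: (bit S i); first exact: relax_bit.
by move=> IM; apply: (reach_weak (b := 7)) => //; apply: relax_skip; rewrite ?bSi.
Qed.

Definition dp_filling S M := [/\ layout M, table_from 0 M, dp_upto S M, M 13 = S & 0 < S].

Lemma dp_body S M : S < 2 ^ k -> dp_filling S M ->
  reach 113 M 113 (dp_filling S.+1) (4 + ((k - 0) * 25 + 2) + 4).
Proof.
move=> lt_S2k [L table dps M13 S_gt0].
have relax_loop := reach_loop (fun i M => @relax_body S i M lt_S2k) (@relax_exit S) (leq0n _).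
apply: reach_seq (reach_seq _ relax_loop) _.
  have L' := L; case_layout L'; have lt_S2k' : (S < 2 ^ k) = true by [].
  do 4 exec_instr.
  by apply: reach_done; split; [keep_layout | keep table | keep dps | read_reg |].
move=> M' [L' table' dps' M'13 M'15]; case_layout L'.
have le_row p : p <= n.+1 -> p * k.+1 <= nsize by move=> le_pn; rewrite leq_mul2r le_pn orbT.
do 4 exec_instr.
apply: reach_done; split; [keep_layout | | | read_reg | by []].
- move=> p c _ le_pn le_ck /=; have le_prow := le_row p le_pn.
  by decide_neq; apply: table'.
- move=> S' lt_S' /=; decide_neq; case: eqP => [eq_S' | ne_S'].
    by rewrite (_ : S' = S) ?dp_unfold; lia.
  by apply: dps'; lia.
Qed.

Lemma dp_exit M : dp_filling (2 ^ k) M ->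
  reach 113 M 146 (fun M => layout M /\ dp_upto (2 ^ k) M) 2.
Proof.
move=> [L table dps M13 _]; have ge_S2k : (2 ^ k < 2 ^ k) = false by rewrite ltnn.
by case_layout L; do 2 exec_instr; apply: reach_done; split; [keep_layout | keep dps].
Qed.

Lemma dp_phase M : layout M -> table_from 0 M ->
  reach 110 M 146 (fun M => layout M /\ dp_upto (2 ^ k) M)
    (3 + ((2 ^ k - 1) * (4 + ((k - 0) * 25 + 2) + 4) + 2)).
Proof.
have pos_2k : 0 < 2 ^ k by rewrite expn_gt0.
move=> L table; apply: reach_seq _ (reach_loop dp_body dp_exit pos_2k).
have L' := L; case_layout L'; do 3 exec_instr.
apply: reach_done; split; [keep_layout | | | read_reg | by []].
- move=> p c _ le_pn le_ck /=; have le_prow : p * k.+1 <= nsize by rewrite leq_mul2r le_pn orbT.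
  by decide_neq; apply: table.
- by move=> S; rewrite ltnS leqn0 => /eqP -> /=; decide_neq; rewrite addn0 eqxx.
Qed.

Lemma final_phase M : layout M -> dp_upto (2 ^ k) M ->
  reach 146 M 150 (fun M => M 0 = disjoint_factorsb k w) 4.
Proof.
have pos_2k : 0 < 2 ^ k by rewrite expn_gt0.
move=> L dps; have dp_full : M (dbase + 2 ^ k).-1 = dp k w (2 ^ k).-1.
  by rewrite -subn1 -addnBA // subn1; apply: dps; rewrite prednK.
by case_layout L; do 4 exec_instr; apply: reach_done; rewrite /disjoint_factorsb ltnS.
Qed.

Lemma df_prog_reach_long : reach 0 (init_mem k w) 150 (fun M => M 0 = disjoint_factorsb k w)
  (999 * (k * 2 ^ k + k * n + 1)).
Proof.
apply: (reach_weak (long_run_cost n k_gt0)).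
apply: (reach_seq copy_phase) => M1 [L1 saved1].
apply: (reach_seq (rows_phase L1 saved1)) => M2 [L2 saved2 filled].
apply: (reach_seq (table_phase L2 saved2 filled)) => M3 [L3 table].
apply: (reach_seq (dp_phase L3 table)) => M4 [L4 dps].
exact: final_phase.
Qed.

End Correctness.

Lemma disjoint_factorsb_short k w : size w <= 1 -> disjoint_factorsb k w = (k == 0).
Proof.
move=> le_w1; apply/disjoint_factorsP/eqP => [[s [e [fac _]]] | ->].
  by apply/eqP; rewrite -leqn0 leqNgt; apply/negP => k_gt0; have [] := fac 1; lia.
by exists (fun=> 0), (fun=> 0); split => i; lia.
Qed.

Lemma df_prog_reach_short k w ws : is_word k w -> size w <= 1 -> 1 < 2 ^ ws ->
  exists2 pc, nth IHalt df_prog pc = IHalt &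
    reach ws df_prog 0 (init_mem k w) pc (fun M => M 0 = disjoint_factorsb k w) 3.
Proof.
move=> word_w le_w1 lt_1W; rewrite disjoint_factorsb_short //.
case: w le_w1 word_w => [|a [|//]] _ word_w.
  exists 152 => //; do 2 apply: reach_step; rewrite /step /=.
  by rewrite modn_small; [apply: reach_done | case: (k == 0); lia].
have k_gt0 : 0 < k by move: word_w; rewrite /is_word /=; lia.
exists 154 => //; do 3 apply: reach_step; rewrite /step /= mod0n.
by apply: reach_done; rewrite (_ : k == 0 = false) //; apply/eqP; lia.
Qed.

Lemma df_prog_reach k w ws : is_word k w -> 1000 * (k * 2 ^ k + k * size w + 1) <= 2 ^ ws ->
  exists2 pc, nth IHalt df_prog pc = IHalt & reach ws df_prog 0 (init_mem k w) pc
    (fun M => M 0 = disjoint_factorsb k w) (999 * (k * 2 ^ k + k * size w + 1)).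
Proof.
move=> word_w cost_fits; case: (leqP (size w) 1) => [le_w1 | lt_1w].
  have lt_1W : 1 < 2 ^ ws by lia.
  have [pc halt run] := df_prog_reach_short word_w le_w1 lt_1W.
  by exists pc => //; apply: reach_weak run; lia.
by exists 150 => //; apply: df_prog_reach_long.
Qed.

Theorem corollary27 :
  exists (P : seq instr) (C : nat),
    forall (k : nat) (w : seq nat) (ws : nat),
      is_word k w ->
      C * (k * 2 ^ k + k * size w + 1) <= 2 ^ ws ->
      exists M : nat -> nat,
        run ws P (C * (k * 2 ^ k + k * size w + 1)) 0 (init_mem k w) = Some M /\
        (DisjointFactors k w -> M 0 = 1) /\
        (~ DisjointFactors k w -> M 0 = 0).
Proof.
exists df_prog, 1000 => k w ws word_w cost_fits.
have [pc halt reach_halt] := df_prog_reach word_w cost_fits.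
have cost_lt : 999 * (k * 2 ^ k + k * size w + 1) < 1000 * (k * 2 ^ k + k * size w + 1).
  by lia.
have [M [run_M M0]] := reach_run reach_halt halt cost_lt.
exists M; split => //; rewrite M0.
by split => [/disjoint_factorsP -> | /disjoint_factorsP /negbTE ->].
Qed.
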